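(* For any path $\mathcal P$, every function $F_{\mathcal P}$ constructed by Algorithm 1 is well defined: if two sets $\{p_1,\dots,p_m\},\{q_1,\dots,q_k\}\subseteq\mathcal B_{\mathcal P}$ satisfy $\bigoplus_i\vec\alpha^{p_i}=\bigoplus_j\vec\alpha^{q_j}$ on $\mathrm{Conn}(\mathcal P)$, then for every class representative $\vec i$ the values assigned by the algorithm to $\vec i\oplus\bigoplus_i\vec\alpha^{p_i}$ and to $\vec i\oplus\bigoplus_j\vec\alpha^{q_j}$ coincide, and the assigned value does not depend on the order in which plaquettes or subsets are processed.
   Context: Let $\Lambda$ be a hexagonal (honeycomb) lattice embedded in a closed orientable surface, with one qubit on each edge. For an edge $j$, $\sigma^x_j,\sigma^z_j$ denote the Pauli operators on qubit $j$ and $n^{\pm}_j=\tfrac12(1\pm\sigma^z_j)$. A (string) configuration $\vec i$ is a computational basis state, viewed as a bit string assigning $0$ (empty) or $1$ (occupied) to each edge; $\vec i\oplus\vec\alpha$ is bitwise addition mod 2. For a hexagonal plaquette $p$, label its boundary edges $1,\dots,6$ cyclically (index $0$ means $6$) and its outgoing edges so that edge $12$ meets edges $6,1$; edge $7$ meets $1,2$; edge $8$ meets $2,3$; edge $9$ meets $3,4$; edge $10$ meets $4,5$; edge $11$ meets $5,6$. Define $B_p=\Big(\prod_{j=1}^6\sigma^x_j\Big)\Big(\prod_{j=1}^6(-1)^{n^-_{j-1}n^+_j}\Big)\,i^{n^-_{12}(n^-_1n^-_6-n^+_1n^+_6)}\,i^{n^-_7(n^+_1n^+_2-n^-_1n^-_2)}\,i^{n^+_8(n^-_2n^+_3-n^+_2n^-_3)}\,i^{n^-_9(n^-_3n^-_4-n^+_3n^+_4)}\,i^{n^-_{10}(n^+_4n^+_5-n^-_4n^-_5)}\,i^{n^+_{11}(n^-_5n^+_6-n^+_5n^-_6)}$;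 all $B_p$ commute pairwise and square to the identity. Write $B_p=\prod_{j\in\partial p}\sigma^x_j\sum_{\vec i}b_p(\vec i)|\vec i\rangle\langle\vec i|$, defining the phase $b_p(\vec i)$. Let $\vec\alpha^p$ be the configuration occupied exactly on the boundary edges of $p$. A path $\mathcal P$ is a sequence of edges forming a walk; $\vec\alpha^{\mathcal P}$ is the mod-2 sum of the indicators of its edges. $\mathrm{Conn}(\mathcal P)$ is the set of edges of $\mathcal P$ together with all edges sharing a vertex with an edge of $\mathcal P$; $\mathcal B_{\mathcal P}$ is the set of plaquettes with at least one boundary edge in $\mathrm{Conn}(\mathcal P)$. Define $\theta_{\mathcal P}(\vec i,p_1,\dots,p_m)=\prod_{k=1}^m \frac{b_{p_k}(\vec i\oplus\vec\alpha^{\mathcal P}\oplus\bigoplus_{j<k}\vec\alpha^{p_j})}{b_{p_k}(\vec i\oplus\bigoplus_{j<k}\vec\alpha^{p_j})}$ (a configuration on $\mathrm{Conn}(\mathcal P)$ being extended arbitrarily to the whole lattice). The configuration class of $\vec i$ on $\mathrm{Conn}(\mathcal P)$ is $\mathcal C_{\mathcal P}(\vec i)=\{\vec i\oplus\bigoplus_{p\in S}\vec\alpha^p|_{\mathrm{Conn}(\mathcal P)}:S\subseteq\mathcal B_{\mathcal P}\}$. Algorithm 1: for each configuration class pick a representative $\vec i$, set $F_{\mathcal P}(\vec i)$ to an arbitrary unit complex number, and for every subset $\{p_1,\dots,p_m\}\subseteq\mathcal B_{\mathcal P}$ set $F_{\mathcal P}(\vec i\oplus\bigoplus_k\vec\alpha^{p_k})=\theta_{\mathcal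 P}(\vec i,p_1,\dots,p_m)F_{\mathcal P}(\vec i)$. *)

From HB Require Import structures.
From mathcomp Require Import all_boot all_order all_algebra all_field.
Set Implicit Arguments. Unset Strict Implicit. Unset Printing Implicit Defensive.
Import GRing.Theory Num.Theory.
Local Open Scope ring_scope.

(* The lattice.  A honeycomb (hexagonal) lattice cellularly embedded in a     *)
(* closed orientable surface is necessarily a torus (Euler characteristic     *)
(* V - E + F = V - 3V/2 + V/2 = 0), namely the quotient of the planar         *)
(* honeycomb by a rank-2 sublattice of its translation lattice Z^2.  We       *)
(* describe it by the finite abelian group G = Z^2 / Lambda of unit cells     *)
(* together with the images a1, a2 of the two unit translations (which must  *)
(* generate G, i.e. the surface is connected).                                *)
(*   Each cell c carries two vertices (c, false) ("A") and (c, true) ("B"),   *)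
(* three edges (c, t), t : 'I_3, and one hexagonal plaquette (named c).       *)
(* Edge (c, t) joins A-vertex (c, false) to B-vertex (c - d_t, true), where   *)
(* d_0 = 0, d_1 = a1, d_2 = a2.                                               *)
Section Honeycomb.
Variables (G : finZmodType) (a1 a2 : G).

Definition edge := (G * 'I_3)%type.
Definition vertex := (G * bool)%type.
Definition config := edge -> bool.   (* string configuration: 1 = occupied *)

Definition edir (t : 'I_3) : G :=
  match val t with O => 0 | S O => a1 | _ => a2 end.

Definition vA (e : edge) : vertex := (e.1, false).
Definition vB (e : edge) : vertex := (e.1 - edir e.2, true).

Definition share_vertex (e f : edge) : bool :=
  [|| vA e == vA f, vA e == vB f, vB e == vA f | vB e == vB f].

Definition other_end (v : vertex) (e : edge) : vertex :=
  if v == vA e then vB e else vA e.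

Fixpoint is_walk (v : vertex) (P : seq edge) : bool :=
  match P with
  | [::] => true
  | e :: P' => ((v == vA e) || (v == vB e)) && is_walk (other_end v e) P'
  end.

Definition is_path (P : seq edge) : Prop := exists v, is_walk v P.

Definition mkE (c : G) (t : nat) : edge := (c, inord t).

(* Boundary edges of plaquette p, in geometric cyclic order k = 0..5 *)
Definition bgeo (p : G) (k : nat) : edge :=
  match (k %% 6)%N with
  | O => mkE p 0%N
  | 1%N => mkE (p + a1) 1%N
  | 2%N => mkE (p + a1) 2%N
  | 3%N => mkE (p + a1 - a2) 0%N
  | 4%N => mkE (p + a1 - a2) 1%N
  | _ => mkE p 2%N
  end.

(* Outgoing edge at the vertex shared by bgeo p k and bgeo p (k+1) *)
Definition ogeo (p : G) (k : nat) : edge :=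
  match (k %% 6)%N with
  | O => mkE (p + a2) 2%N
  | 1%N => mkE (p + a1) 0%N
  | 2%N => mkE (p + a1 *+ 2 - a2) 1%N
  | 3%N => mkE (p + a1 - a2) 2%N
  | 4%N => mkE (p - a2) 0%N
  | _ => mkE p 1%N
  end.

(* the lattice is a genuine hexagonal lattice: the 6 boundary and 6
   outgoing edges of each plaquette are 12 distinct edges *)
Definition honeycomb_nondeg : Prop :=
  forall p : G, uniq ([seq bgeo p k | k <- iota 0 6] ++ [seq ogeo p k | k <- iota 0 6]).

(* Labelling of each plaquette (same convention for all plaquettes, i.e.     *)
(* translation invariant): boundary label 1 is geometric edge s, and labels  *)
(* run in direction d (false: increasing k, true: decreasing k).             *)
Variables (s : 'I_6) (d : bool).

Definition kidx (j : nat) : nat := if d then (s + 5 * j)%N else (s + j)%N.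

(* boundary edge with label j in 1..6 (label 0 means 6) *)
Definition bnd (p : G) (j : nat) : edge := bgeo p (kidx (j + 5)).

(* outgoing edge with label l in 7..12: label 7 + j' (j' = 0..4) meets
   boundary labels j'+1, j'+2; label 12 meets labels 6 and 1 *)
Definition outl (p : G) (l : nat) : edge :=
  let j := ((l + 5) %% 6)%N in ogeo p (if d then kidx j.+1 else kidx j).

Definition bnds (p : G) : seq edge := [seq bnd p j | j <- iota 1 6].

(* n^-_e = 1 iff e occupied, n^+_e = 1 iff e empty *)
Definition nm (i : config) (e : edge) : int := (i e : nat)%:Z.
Definition np (i : config) (e : edge) : int := ((~~ i e) : nat)%:Z.

(* the phase b_p(i) of B_p = prod_{j in dp} sigma^x_j  sum_i b_p(i)|i><i| *)
Definition bphase (p : G) (i : config) : algC :=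
  let m j := nm i (bnd p j) in let pl j := np i (bnd p j) in
  let om l := nm i (outl p l) in let op l := np i (outl p l) in
  let sg : int := \sum_(1 <= j < 7) m (j.-1) * pl j in
  let ex : int :=
      om 12 * (m 1 * m 6 - pl 1 * pl 6)
    + om 7  * (pl 1 * pl 2 - m 1 * m 2)
    + op 8  * (m 2 * pl 3 - pl 2 * m 3)
    + om 9  * (m 3 * m 4 - pl 3 * pl 4)
    + om 10 * (pl 4 * pl 5 - m 4 * m 5)
    + op 11 * (m 5 * pl 6 - pl 5 * m 6) in
  (-1) ^ sg * 'i ^ ex.

Definition cadd (i a : config) : config := fun e => i e (+) a e.

Definition alpha_p (p : G) : config := fun e => e \in bnds p.

Definition alpha_path (P : seq edge) : config := fun e => odd (count_mem e P).

Definition plaqsum (t : seq G) : config :=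
  fun e => odd (count (fun q => alpha_p q e) t).

Definition inConn (P : seq edge) (e : edge) : bool :=
  has (fun f => (f == e) || share_vertex f e) P.
Definition inBP (P : seq edge) (p : G) : bool := has (inConn P) (bnds p).

Definition thetaP (P : seq edge) (i : config) (ps : seq G) : algC :=
  \prod_(k < size ps)
     (bphase (nth 0 ps k) (cadd (cadd i (alpha_path P)) (plaqsum (take k ps)))
      / bphase (nth 0 ps k) (cadd i (plaqsum (take k ps)))).

End Honeycomb.

(* Proof idea.  theta_P(i; p_1..p_m) is a product, over the plaquettes p_k, of
   ratios b_{p_k}(j + alpha^P) / b_{p_k}(j) at the successive configurations
   j = i + alpha^{p_1} + ... + alpha^{p_(k-1)}.  For a single edge e we exhibit
   a "potential" F_e, a Z/4-valued function of the occupations of the five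
   edges of the star of e (e and the four edges sharing a vertex with it), with
     b_q(j + alpha^e) i^{F_e(j)} = b_q(j) i^{F_e(j + alpha^q)}   for all q, j.
   The product defining theta then telescopes (thetaP_coboundary):
     theta_e(j; S) = i^{F_e(j + sum_S alpha^q)} / i^{F_e(j)},
   which only depends on j + sum_S alpha^q restricted to Conn(e), so it is
   independent of the order of S, of the choice of S and of the values of j
   off Conn(e).  A path P is handled edge by edge, since theta_{e::P} splits as
   theta_e(j + alpha^P) * theta_P(j). *)
From HB Require Import structures.
From mathcomp Require Import all_boot all_order all_algebra all_field.
From mathcomp Require Import zify ring.
From Stdlib Require Import FunctionalExtensionality.
Import GRing.Theory Num.Theory.
Local Open Scope ring_scope.

(* Powers of i.  The phases b_p are powers of i (with (-1) = i^2), and all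
   identities between them only need to hold for exponents modulo 4. *)

Lemma expCi4 : 'i ^+ 4 = 1 :> algC.
Proof. by rewrite (exprM _ 2 2) sqrCi expr2 mulrNN mulr1. Qed.

Lemma expCi_mod (z z' : int) : (z == z' %[mod 4])%Z -> 'i ^ z = 'i ^ z' :> algC.
Proof.
have reduce w : 'i ^ w = 'i ^ (w %% 4)%Z :> algC.
  rewrite {1}(divz_eq w 4) exprzDr ?unitfE ?neq0Ci // [((_ %/ 4)%Z * 4)%R]mulrC -exprz_exp.
  by rewrite [X in X ^ _](_ : _ = 1) ?exp1rz ?mul1r //; exact: expCi4.
by move=> /eqP E; rewrite reduce E -reduce.
Qed.

(* The form in which the coboundary identity is verified: a congruence between
   the change E' - E of a phase exponent and the change F' - F of a potential. *)
Lemma expCi_cross (E E' F F' : int) : (E' - E == F' - F %[mod 4])%Z ->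
  'i ^ E' * 'i ^ F = 'i ^ E * 'i ^ F' :> algC.
Proof.
move=> H; rewrite -!exprzDr ?unitfE ?neq0Ci //; apply: expCi_mod.
rewrite -(eqz_modDr (E + F)).
rewrite (_ : E' + F + _ = E' - E + (E + F) + (E + F)); last by ring.
by rewrite (_ : E + F' + _ = F' - F + (E + F) + (E + F)) ?eqz_modDr //; ring.
Qed.

Section ThetaAlgebra.
Variables (G : finZmodType) (a1 a2 : G) (s : 'I_6) (d : bool).
Local Notation bphase := (bphase a1 a2 s d).
Local Notation alpha_p := (alpha_p a1 a2 s d).
Local Notation plaqsum := (plaqsum a1 a2 s d).
Local Notation thetaP := (thetaP a1 a2 s d).

Lemma cadd_plaqsum0 (j : config G) : cadd j (plaqsum [::]) = j.
Proof. by apply: functional_extensionality => x; rewrite /cadd /plaqsum /= addbF. Qed.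

Lemma cadd_plaqsum_cons (j : config G) q S :
  cadd j (plaqsum (q :: S)) = cadd (cadd j (alpha_p q)) (plaqsum S).
Proof.
by apply: functional_extensionality => x; rewrite /cadd /plaqsum /= oddD oddb addbA.
Qed.

Lemma caddAC (j a b : config G) : cadd (cadd j a) b = cadd (cadd j b) a.
Proof. by apply: functional_extensionality => x; rewrite /cadd addbAC. Qed.

Lemma cadd_alpha_path0 (j : config G) : cadd j (alpha_path [::]) = j.
Proof. by apply: functional_extensionality => x; rewrite /cadd /alpha_path /= addbF. Qed.

Lemma cadd_alpha_path_cons (j : config G) e P :
  cadd j (alpha_path (e :: P)) = cadd (cadd j (alpha_path P)) (alpha_path [:: e]).
Proof.
apply: functional_extensionality => x.
by rewrite /cadd /alpha_path /= addn0 oddD oddb addbA addbAC.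
Qed.

Lemma bphase_neq0 p (j : config G) : bphase p j != 0.
Proof. by rewrite mulf_neq0 // expfz_neq0 // ?oppr_eq0 ?oner_eq0 ?neq0Ci. Qed.

Lemma thetaP_cons P (j : config G) q S :
  thetaP P j (q :: S) =
  bphase q (cadd j (alpha_path P)) / bphase q j * thetaP P (cadd j (alpha_p q)) S.
Proof.
rewrite /thetaP big_ord_recl /= !cadd_plaqsum0; congr (_ * _).
by apply: eq_bigr => k _ /=; rewrite !cadd_plaqsum_cons [cadd (cadd j _) (alpha_p q)]caddAC.
Qed.

Lemma thetaP_coboundary P (w : config G -> algC) :
  (forall j, w j != 0) ->
  (forall q j, bphase q (cadd j (alpha_path P)) * w j = bphase q j * w (cadd j (alpha_p q))) ->
  forall j S, thetaP P j S = w (cadd j (plaqsum S)) / w j.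
Proof.
move=> w_neq0 w_cobound j S; elim: S j => [|q S IH] j.
  by rewrite /thetaP big_ord0 cadd_plaqsum0 divff.
have ratio : bphase q (cadd j (alpha_path P)) / bphase q j = w (cadd j (alpha_p q)) / w j.
  by apply/eqP; rewrite eqr_div ?bphase_neq0 // w_cobound mulrC.
by rewrite thetaP_cons IH cadd_plaqsum_cons ratio mulrC mulrA divfK.
Qed.

Lemma thetaP_nil_path (j : config G) S : thetaP [::] j S = 1.
Proof. by rewrite /thetaP big1 // => k _; rewrite cadd_alpha_path0 divff ?bphase_neq0. Qed.

Lemma thetaP_cons_path e P (j : config G) S :
  thetaP (e :: P) j S = thetaP [:: e] (cadd j (alpha_path P)) S * thetaP P j S.
Proof.
rewrite /thetaP -big_split; apply: eq_bigr => k _ /=.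
by rewrite cadd_alpha_path_cons [cadd (cadd j _) (plaqsum _)]caddAC mulrA divfK ?bphase_neq0.
Qed.

End ThetaAlgebra.

(* A cell of the torus is g + a1 *~ x + a2 *~ y; we write
   edges relative to a reference cell g as pairs (offset, type), so that the
   geometry of all plaquettes near an edge can be computed once and for all
   independently of G.  [bnd_off k, bnd_typ k] and [out_off k, out_typ k] are
   the geometric boundary and outgoing edges k = 0..5 of the plaquette at the
   origin (cf. bgeo and ogeo). *)
Definition vec := (int * int)%type.
Definition redge := (vec * nat)%type.

Definition vadd (u w : vec) : vec := (u.1 + w.1, u.2 + w.2).
Definition vsub (u w : vec) : vec := (u.1 - w.1, u.2 - w.2).
Definition vneg (u : vec) : vec := (- u.1, - u.2).

(* offset between the two endpoints of an edge of type t (cf. edir) *)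
Definition dir_vec (t : nat) : vec :=
  match t with 0%N => (0, 0) | 1%N => (1, 0) | _ => (0, 1) end.

Definition bnd_off (k : nat) : vec :=
  match k with 0%N => (0, 0) | 1%N | 2%N => (1, 0) | 3%N | 4%N => (1, -1) | _ => (0, 0) end.
Definition bnd_typ (k : nat) : nat :=
  match k with 0%N | 3%N => 0 | 1%N | 4%N => 1 | _ => 2 end.
Definition out_off (k : nat) : vec :=
  match k with
  | 0%N => (0, 1) | 1%N => (1, 0) | 2%N => (2, -1) | 3%N => (1, -1) | 4%N => (0, -1)
  | _ => (0, 0)
  end.
Definition out_typ (k : nat) : nat :=
  match k with 0%N | 3%N => 2 | 1%N | 4%N => 0 | _ => 1 end.

(* The labelled edges (labels 1..6, then 7..12) of the plaquette at offset v,
   mirroring kidx, bnd and outl of the definitions with s read as a number. *)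
Definition rkidx (s : nat) (d : bool) (j : nat) : nat := if d then (s + 5 * j)%N else (s + j)%N.
Definition rbnd (s : nat) (d : bool) (v : vec) (L : nat) : redge :=
  let k := (rkidx s d (L + 5) %% 6)%N in (vadd v (bnd_off k), bnd_typ k).
Definition routl (s : nat) (d : bool) (v : vec) (l : nat) : redge :=
  let j := ((l + 5) %% 6)%N in
  let k := ((if d then rkidx s d j.+1 else rkidx s d j) %% 6)%N in
  (vadd v (out_off k), out_typ k).
Definition rlabelled (s : nat) (d : bool) (v : vec) : seq redge :=
  [seq rbnd s d v L | L <- iota 1 6] ++ [seq routl s d v l | l <- iota 7 6].

Definition bz (b : bool) : int := (b : nat)%:Z.

(* The exponent e with b_p = i^e, as a function of the occupations bs of the
   twelve labelled edges of p (position l-1 holds label l); the sign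
   (-1)^sg of b_p contributes 2 sg. *)
Definition phase_exp (bs : seq bool) : int :=
  let m j := bz (nth false bs (if j is j'.+1 then j' else 5)) in
  let pl j := bz (~~ nth false bs (if j is j'.+1 then j' else 5)) in
  let om l := bz (nth false bs l.-1) in
  let op l := bz (~~ nth false bs l.-1) in
  2 * (m 0%N * pl 1%N + (m 1%N * pl 2%N + (m 2%N * pl 3%N + (m 3%N * pl 4%N
       + (m 4%N * pl 5%N + (m 5%N * pl 6%N + 0))))))
  + (om 12%N * (m 1%N * m 6%N - pl 1%N * pl 6%N)
   + om 7%N  * (pl 1%N * pl 2%N - m 1%N * m 2%N)
   + op 8%N  * (m 2%N * pl 3%N - pl 2%N * m 3%N)
   + om 9%N  * (m 3%N * m 4%N - pl 3%N * pl 4%N)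
   + om 10%N * (pl 4%N * pl 5%N - m 4%N * m 5%N)
   + op 11%N * (m 5%N * pl 6%N - pl 5%N * m 6%N)).

Section Coordinates.
Variables (G : finZmodType) (a1 a2 : G).

Definition cell (u : vec) : G := a1 *~ u.1 + a2 *~ u.2.
Definition place (g : G) (u : redge) : edge G := (g + cell u.1, inord u.2).

Lemma cellD u w : cell (vadd u w) = cell u + cell w.
Proof. by rewrite /cell /vadd /= !mulrzDr addrACA. Qed.

Lemma cellB u w : cell (vsub u w) = cell u - cell w.
Proof. by rewrite /cell /vsub /= !mulrzBr opprD addrACA. Qed.

Lemma bgeoE p k : bgeo a1 a2 p k = (p + cell (bnd_off (k %% 6)), inord (bnd_typ (k %% 6))).
Proof.
rewrite /bgeo /mkE /cell; case: (k %% 6)%N => [|[|[|[|[|n]]]]] /=; congr pair;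
  by rewrite ?mulr0z ?mulr1z ?mulrN1z ?addr0 ?addrA.
Qed.

Lemma ogeoE p k : ogeo a1 a2 p k = (p + cell (out_off (k %% 6)), inord (out_typ (k %% 6))).
Proof.
rewrite /ogeo /mkE /cell; case: (k %% 6)%N => [|[|[|[|[|n]]]]] /=; congr pair;
  by rewrite ?mulr0z ?mulr1z ?mulrN1z ?mulrz_nat ?addr0 ?add0r ?addrA.
Qed.

Variables (s : 'I_6) (d : bool).

Lemma bnd_place g v L : bnd a1 a2 s d (g + cell v) L = place g (rbnd s d v L).
Proof. by rewrite /bnd bgeoE /place /rbnd -addrA -cellD. Qed.

Lemma outl_place g v l : outl a1 a2 s d (g + cell v) l = place g (routl s d v l).
Proof. by rewrite /outl ogeoE /place /routl -addrA -cellD. Qed.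

Definition labelled (p : G) : seq (edge G) :=
  [seq bnd a1 a2 s d p L | L <- iota 1 6] ++ [seq outl a1 a2 s d p l | l <- iota 7 6].

Lemma labelled_place g v : labelled (g + cell v) = map (place g) (rlabelled s d v).
Proof.
by rewrite /labelled /rlabelled map_cat -!map_comp; congr (_ ++ _); apply/eq_map => L /=;
  rewrite ?bnd_place ?outl_place.
Qed.

Lemma bphase_exp p (j : config G) :
  bphase a1 a2 s d p j = 'i ^ phase_exp [seq j e | e <- labelled p].
Proof.
have bnd06 : bnd a1 a2 s d p 0 = bnd a1 a2 s d p 6.
  have same_mod6 : (kidx s d (0 + 5) %% 6 = kidx s d (6 + 5) %% 6)%N.
    by rewrite /kidx; case: d; lia.
  by rewrite /bnd !bgeoE same_mod6.
rewrite /bphase /phase_exp unlock /= bnd06 [in RHS]exprzDr ?unitfE ?neq0Ci // -exprz_exp.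
by congr (_ ^ _ * _ ^ _); rewrite -sqrCi.
Qed.

End Coordinates.

Arguments cell {G} a1 a2 u : simpl never.
Arguments place {G} a1 a2 g u.
Arguments labelled {G} a1 a2 s d p.

(* The star of an edge of type t at the origin: the edge itself, then the two
   other edges at its A-endpoint, then the two other edges at its B-endpoint
   (each pair in increasing order of type). *)
Definition redge0 (t : nat) : redge := ((0, 0), t).
Definition other_types (t : nat) : seq nat := [seq u <- iota 0 3 | u != t].
Definition star (t : nat) : seq redge :=
  redge0 t :: [seq ((0, 0), u) | u <- other_types t]
          ++ [seq (vadd (vneg (dir_vec t)) (dir_vec u), u) | u <- other_types t].

(* Which of the two weights occurs, and the sign, depend on the type of e
   relative to the labelling convention (s, d); [aligned] holds when e is
   parallel to the edges labelled 1 and 4. *)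
Definition vertex_weight (aligned : bool) (b x y : bool) : int :=
  if aligned then bz x - bz x * bz y + 2 * bz b * bz y * bz (~~ x)
  else - (bz x * bz y) + 2 * bz b * (bz x + bz y + bz x * bz y).

Definition potential (s : nat) (d : bool) (t : nat) (bs : seq bool) : int :=
  let r := ((t + 2 * s) %% 3)%N in
  let aligned := r == 0%N in
  let sign : int := (-1) ^+ (d (+) (r == 2%N) (+) (aligned && (s %% 3 == 1)%N)) in
  let b k := nth false bs k in
  sign * (3 * bz (b 0%N) + vertex_weight aligned (b 0%N) (b 1%N) (b 2%N)
                         + vertex_weight aligned (b 0%N) (b 3%N) (b 4%N)).

Fixpoint all_bits (n : nat) : seq (seq bool) :=
  if n is n'.+1 then [seq b :: x | b <- [:: false; true], x <- all_bits n'] else [:: [::]].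

Lemma all_bitsP (b : seq bool) : b \in all_bits (size b).
Proof.
elim: b => [|x b IH] //=.
have x_bool : x \in [:: false; true] by case: x.
exact: (allpairs_f (fun (y : bool) (z : seq bool) => y :: z) x_bool IH).
Qed.

Definition xorl (a b : seq bool) : seq bool := [seq x.1 (+) x.2 | x <- zip a b].

Lemma xorl_map (T : Type) (f g : T -> bool) (r : seq T) :
  xorl (map f r) (map g r) = map (fun x => f x (+) g x) r.
Proof. by rewrite /xorl; elim: r => //= x r ->. Qed.

Definition unitv (k : nat) : seq bool := [seq i == k | i <- iota 0 12].
Definition phase_delta (k : nat) (bs : seq bool) : int :=
  phase_exp (xorl bs (unitv k)) - phase_exp bs.

(* Positions q of the labelled edges of a plaquette sharing a vertex with the
   edge at position p (or equal to it): neighbouring boundary edges, and the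
   outgoing edges at the endpoints of a boundary edge. *)
Definition plaq_adj (p q : nat) : bool :=
  if (p < 6)%N then
    if (q < 6)%N then [|| q == p, q == (p + 1) %% 6 | q == (p + 5) %% 6]%N
    else (q - 6 == p)%N || (q - 6 == (p + 5) %% 6)%N
  else [|| q == p, q == p - 6 | q == (p - 5) %% 6]%N.

Definition keep_adj (k : nat) (bs : seq bool) : seq bool :=
  [seq nth false bs i && plaq_adj k i | i <- iota 0 12].

Lemma phase_delta_keep_check :
  all (fun k => all (fun bs => phase_delta k bs == phase_delta k (keep_adj k bs)) (all_bits 12))
      (iota 0 12).
Proof. by vm_compute. Qed.

Lemma phase_delta_local k (bs bs' : seq bool) : (k < 12)%N -> size bs = 12 -> size bs' = 12 ->
  (forall i, (i < 12)%N -> plaq_adj k i -> nth false bs i = nth false bs' i) ->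
  phase_delta k bs = phase_delta k bs'.
Proof.
move=> k12 size_bs size_bs' agree.
have keepE b : size b = 12 -> phase_delta k b = phase_delta k (keep_adj k b).
  move=> size_b; apply/eqP.
  move/allP: phase_delta_keep_check => /(_ k); rewrite mem_iota k12 => /(_ isT) /allP; apply.
  by have := all_bitsP b; rewrite size_b.
rewrite keepE // [RHS]keepE //; congr (phase_delta k _); apply/eq_in_map => i.
rewrite mem_iota add0n => /andP[_ i12].
by case adj_ki: (plaq_adj k i); rewrite ?andbT ?andbF ?agree.
Qed.

(* Relative offsets of the plaquettes whose twelve labelled edges contain the
   edge of type t at the origin; all other plaquettes are "far" from it. *)
Definition near (t : nat) : seq vec :=
  [seq vneg (bnd_off k) | k <- iota 0 6 & bnd_typ k == t]
  ++ [seq vneg (out_off k) | k <- iota 0 6 & out_typ k == t].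

Definition assign (C : seq redge) (x : seq bool) (u : redge) : bool := nth false x (index u C).

(* Finite form of the coboundary identity at the near plaquette v: the edge
   e = redge0 t sits at a single position k of the plaquette, its neighbours
   there belong to its star, and for every configuration of the star the
   change of phase exponent equals the change of potential modulo 4, where the
   plaquette flip alpha^q acts on the star through flipC. *)
Definition near_flip_ok (s : nat) (d : bool) (t : nat) (v : vec) : bool :=
  let P := rlabelled s d v in let C := star t in let k := index (redge0 t) P in
  let flipC := [seq c \in take 6 P | c <- C] in
  [&& (k < 12)%N, [seq redge0 t == u | u <- P] == unitv k,
      all (fun i => plaq_adj k i ==> (nth (redge0 t) P i \in C)) (iota 0 12) &
      all (fun x => (phase_delta k (map (assign C x) P)
                     == potential s d t (xorl x flipC) - potential s d t x %[mod 4])%Z)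
          (all_bits (size C))].

(* [separated u w] certifies that u and w name distinct edges of the lattice
   unless u = w: either their types differ, or their offsets differ by the
   offset between two distinct parallel edges of one plaquette, which is
   nonzero in G by honeycomb_nondeg. *)
Definition geo12 : seq redge :=
  [seq (bnd_off k, bnd_typ k) | k <- iota 0 6] ++ [seq (out_off k, out_typ k) | k <- iota 0 6].
Definition nonzero_offsets : seq vec :=
  [seq vsub x.1.1 x.2.1 | x <- [seq (u, w) | u <- geo12, w <- geo12]
                        & (x.1 != x.2) && (x.1.2 == x.2.2)].
Definition separated (u w : redge) : bool :=
  [|| u == w, (u.2 != w.2) && (u.2 < 3)%N && (w.2 < 3)%N | vsub u.1 w.1 \in nonzero_offsets].

Definition separated_ok (s : nat) (d : bool) (t : nat) (v : vec) : bool :=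
  let P := rlabelled s d v in
  all (separated (redge0 t)) P && all (fun c => all (separated c) (take 6 P)) (star t).

(* Every plaquette whose boundary meets the star of e, or having e as an
   outgoing edge, is near e. *)
Definition near_closed (t : nat) : bool :=
  all (fun c => (c.2 < 3)%N &&
         all (fun k => (bnd_typ k == c.2) ==> (vsub c.1 (bnd_off k) \in near t)) (iota 0 6))
      (star t)
  && all (fun k => (out_typ k == t) ==> (vsub (0, 0) (out_off k) \in near t)) (iota 0 6).

Definition rvA (u : redge) : vec * bool := (u.1, false).
Definition rvB (u : redge) : vec * bool := (vsub u.1 (dir_vec u.2), true).
Definition rshare (u w : redge) : bool :=
  [|| rvA u == rvA w, rvA u == rvB w, rvB u == rvA w | rvB u == rvB w].
Definition star_adjacent (t : nat) : bool :=
  all (fun c => (c == redge0 t) || rshare (redge0 t) c) (star t).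

Definition edge_type_certificate : bool :=
  all (fun t => near_closed t && star_adjacent t) (iota 0 3).

Lemma edge_type_certificate_ok : edge_type_certificate.
Proof. by vm_compute. Qed.

Lemma edge_type_ok (t : 'I_3) : near_closed t && star_adjacent t.
Proof. by move/allP: edge_type_certificate_ok => /(_ t); rewrite mem_iota ltn_ord; apply. Qed.

Definition near_certificate : bool :=
  all (fun s => all (fun d => all (fun t =>
         all (fun v => near_flip_ok s d t v && separated_ok s d t v) (near t))
       (iota 0 3)) [:: false; true]) (iota 0 6).

Lemma near_certificate_ok : near_certificate.
Proof. by vm_compute. Qed.

Lemma near_ok (s : 'I_6) (d : bool) (t : 'I_3) v :
  v \in near t -> near_flip_ok s d t v && separated_ok s d t v.
Proof.
move=> near_v; move/allP: near_certificate_ok => /(_ s); rewrite mem_iota ltn_ord => /(_ isT).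
move=> /allP /(_ d); rewrite inE mem_seq1; case: d => /(_ isT) /allP /(_ t);
by rewrite mem_iota ltn_ord => /(_ isT) /allP; apply.
Qed.

Lemma uniq_map_inj_in {T1 T2 : eqType} {f : T1 -> T2} {r : seq T1} :
  uniq (map f r) -> {in r &, injective f}.
Proof.
elim: r => //= z r IH /andP[fz_notin uniq_fr] x y; rewrite !inE.
case/predU1P => [->|xr] /predU1P[->|yr] // fxy.
- by move: fz_notin; rewrite fxy (map_f f yr).
- by move: fz_notin; rewrite -fxy (map_f f xr).
- exact: IH.
Qed.

Lemma bnd_typ_lt3 k : (bnd_typ k < 3)%N.
Proof. by case: k => [|[|[|[|[|k]]]]]. Qed.

Lemma out_typ_lt3 k : (out_typ k < 3)%N.
Proof. by case: k => [|[|[|[|[|k]]]]]. Qed.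

Section Placement.
Variables (G : finZmodType) (a1 a2 : G).
Local Notation cell := (cell a1 a2).
Local Notation place := (place a1 a2).

Lemma nonzero_offsets_ok :
  honeycomb_nondeg a1 a2 -> forall w, w \in nonzero_offsets -> cell w != 0.
Proof.
move=> nondeg w; have uniq12 : uniq (map (place 0) geo12).
  have := nondeg 0; congr (uniq _); rewrite /geo12 map_cat; congr (_ ++ _); rewrite -map_comp;
  apply/eq_in_map => k; rewrite mem_iota => /andP[_ k6].
  + by rewrite bgeoE /place modn_small.
  + by rewrite ogeoE /place modn_small.
case/mapP => -[u u']; rewrite mem_filter => /andP[/andP[uu' /eqP same_typ] pairs] ->.
case/allpairsP: pairs => -[x x'] [/= xL x'L [Eu Eu']]; subst x x'.
apply: contra uu' => /=; rewrite cellB subr_eq0 => /eqP same_cell; apply/eqP.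
by apply: (uniq_map_inj_in uniq12 _ _ xL x'L); rewrite /place same_cell /= same_typ.
Qed.

Lemma place_separated : honeycomb_nondeg a1 a2 ->
  forall g u w, separated u w -> (place g u == place g w) = (u == w).
Proof.
move=> nondeg g u w; case: (eqVneq u w) => [->|uw]; first by rewrite !eqxx.
rewrite /separated (negbTE uw) /= => sep; apply/negbTE.
rewrite /place xpair_eqE negb_and.
case/orP: sep => [/andP[/andP[typ_neq u3] w3]|/(nonzero_offsets_ok nondeg) nz].
  by apply/orP; right; apply: contra typ_neq => /eqP /(congr1 val) /=; rewrite !inordK // => ->.
apply/orP; left; apply: contra nz; rewrite (inj_eq (addrI g)) cellB => /eqP ->.
by rewrite subrr.
Qed.

Lemma mem_place_separated : honeycomb_nondeg a1 a2 ->
  forall g u W, all (separated u) W -> (place g u \in map (place g) W) = (u \in W).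
Proof.
move=> nondeg g u; elim=> //= w W IH /andP[sep_uw sep_uW].
by rewrite !inE IH // place_separated.
Qed.

Lemma bnd_eq_place (s : 'I_6) (d : bool) q L g (c : redge) : (c.2 < 3)%N ->
  bnd a1 a2 s d q L = place g c ->
  exists2 k, (k < 6)%N & bnd_typ k = c.2 /\ q = g + cell (vsub c.1 (bnd_off k)).
Proof.
move=> c3; rewrite /bnd bgeoE /place => -[Eq Et].
exists (kidx s d (L + 5) %% 6)%N; first by rewrite ltn_pmod.
split; last by rewrite cellB addrA -Eq addrK.
by move: (congr1 val Et); rewrite /= !inordK // bnd_typ_lt3.
Qed.

Lemma outl_eq_place (s : 'I_6) (d : bool) q l g (c : redge) : (c.2 < 3)%N ->
  outl a1 a2 s d q l = place g c ->
  exists2 k, (k < 6)%N & out_typ k = c.2 /\ q = g + cell (vsub c.1 (out_off k)).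
Proof.
move=> c3; rewrite /outl ogeoE /place => -[Eq Et].
set k := (_ %% 6)%N in Eq Et; exists k; first by rewrite ltn_pmod.
split; last by rewrite cellB addrA -Eq addrK.
by move: (congr1 val Et); rewrite /= !inordK // out_typ_lt3.
Qed.

Lemma edir_cell (t : nat) : (t < 3)%N -> edir a1 a2 (inord t) = cell (dir_vec t).
Proof.
rewrite /edir /cell; case: t => [|[|[|t]]] //= t3; rewrite inordK //=;
by rewrite ?mulr0z ?mulr1z ?addr0 ?add0r.
Qed.

Lemma share_vertex_place g u w : (u.2 < 3)%N -> (w.2 < 3)%N -> rshare u w ->
  share_vertex a1 a2 (place g u) (place g w).
Proof.
move=> u3 w3.
have vA_place x : vA (place g x) = (g + cell (rvA x).1, (rvA x).2) by [].
have vB_place x : (x.2 < 3)%N -> vB a1 a2 (place g x) = (g + cell (rvB x).1, (rvB x).2).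
  by move=> x3; rewrite /vB /place /= (edir_cell _ x3) -addrA -cellB.
have lift x y : x == y -> (g + cell x.1, x.2) == (g + cell y.1, y.2) by move=> /eqP ->.
rewrite /share_vertex !vA_place !vB_place //.
by case/or4P => /lift E; apply/or4P; [constructor 1|constructor 2|constructor 3|constructor 4].
Qed.

End Placement.

Arguments place_separated {G a1 a2}.
Arguments mem_place_separated {G a1 a2}.
Arguments bnd_eq_place {G a1 a2} s d {q L g c}.
Arguments outl_eq_place {G a1 a2} s d {q l g c}.
Arguments share_vertex_place {G a1 a2}.

Section SingleEdge.
Variables (G : finZmodType) (a1 a2 : G) (s : 'I_6) (d : bool).
Hypothesis nondeg : honeycomb_nondeg a1 a2.
Variables (g : G) (t : 'I_3).
Local Notation e := ((g, t) : edge G).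
Local Notation cell := (cell a1 a2).
Local Notation place := (place a1 a2 g).
Local Notation bphase := (bphase a1 a2 s d).
Local Notation alpha_p := (alpha_p a1 a2 s d).

Definition edge_potential (j : config G) : int := potential s d t [seq j (place c) | c <- star t].

Lemma alpha_edge x : alpha_path [:: e] x = (e == x).
Proof. by rewrite /alpha_path /= addn0 oddb. Qed.

Lemma place_redge0 : place (redge0 t) = e.
Proof. by rewrite /place /cell /= !mulr0z !addr0 inord_val. Qed.

(* Near plaquettes: the finite certificate, transported to the lattice. *)
Lemma near_flip v (j : config G) : v \in near t ->
  bphase (g + cell v) (cadd j (alpha_path [:: e])) * 'i ^ edge_potential j
  = bphase (g + cell v) j * 'i ^ edge_potential (cadd j (alpha_p (g + cell v))).
Proof.
move=> near_v; have /andP[] := near_ok s d t v near_v.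
case/and4P=> k12 /eqP e_at_k adj_in_star flips /andP[/allP sep_e /allP sep_star].
set P := rlabelled s d v in e_at_k adj_in_star flips sep_e sep_star.
set k := index (redge0 t) P in k12 e_at_k adj_in_star flips.
set rho := fun u => j (place u); set x := map rho (star t).
have sizeP : size P = 12 by rewrite size_cat !size_map !size_iota.
have bnds_q : bnds a1 a2 s d (g + cell v) = map place (take 6 P).
  rewrite take_size_cat ?size_map ?size_iota // -map_comp.
  by apply/eq_map => L /=; rewrite bnd_place.
have phase_j : map j (labelled a1 a2 s d (g + cell v)) = map rho P.
  by rewrite labelled_place -map_comp.
have phase_flip : map (cadd j (alpha_path [:: e])) (labelled a1 a2 s d (g + cell v))
                  = xorl (map rho P) (unitv k).
  rewrite labelled_place -map_comp -e_at_k xorl_map; apply/eq_in_map => u uP /=.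
  by rewrite /cadd alpha_edge -place_redge0 (place_separated nondeg) // sep_e.
have pot_flip : edge_potential (cadd j (alpha_p (g + cell v)))
                = potential s d t (xorl x [seq c \in take 6 P | c <- star t]).
  rewrite /edge_potential xorl_map; congr (potential _ _ _ _); apply/eq_in_map => c c_star.
  by rewrite /cadd /alpha_p bnds_q (mem_place_separated nondeg) // sep_star.
have assign_rho : {in star t, assign (star t) x =1 rho}.
  by move=> c c_star; rewrite /assign (nth_map c) ?index_mem // nth_index.
have local : phase_delta k (map rho P) = phase_delta k (map (assign (star t) x) P).
  apply: phase_delta_local; rewrite ?size_map ?sizeP // => i i12 adj.
  have iP : (i < size P)%N by rewrite sizeP.
  rewrite !(nth_map (redge0 t)) // assign_rho //.
  by have := implyP (allP adj_in_star i _) adj; apply; rewrite mem_iota.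
rewrite !bphase_exp phase_j phase_flip pot_flip; apply: expCi_cross.
rewrite -/(phase_delta k (map rho P)) local; apply: (allP flips).
by rewrite -(size_map rho) all_bitsP.
Qed.

(* Far plaquettes contain neither e nor, on their boundary, its star. *)
Lemma far_flip q (j : config G) : (forall v, v \in near t -> q != g + cell v) ->
  bphase q (cadd j (alpha_path [:: e])) = bphase q j.
Proof.
move=> far; have /andP[/andP[/allP star_closed /allP out_closed] _] := edge_type_ok t.
have e_star : redge0 t \in star t by rewrite inE eqxx.
have /andP[_ /allP bnd_closed] := star_closed _ e_star.
rewrite !bphase_exp; congr ('i ^ phase_exp _); apply/eq_in_map => f f_lab.
rewrite /cadd alpha_edge -place_redge0; case: eqP => [Ef|_]; last by rewrite addbF.
exfalso; move: f_lab; rewrite /labelled mem_cat => /orP[] /mapP[L _ Lf]; rewrite Lf in Ef.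
- have [k k6 [typ_k Eq]] := bnd_eq_place s d (c := redge0 t) (ltn_ord t) (esym Ef).
  have near_k : vsub (redge0 t).1 (bnd_off k) \in near t.
    by apply: (implyP (bnd_closed k _)); rewrite ?mem_iota ?typ_k.
  by move: (far _ near_k); rewrite Eq eqxx.
- have [k k6 [typ_k Eq]] := outl_eq_place s d (c := redge0 t) (ltn_ord t) (esym Ef).
  have near_k : vsub (redge0 t).1 (out_off k) \in near t.
    by apply: (implyP (out_closed k _)); rewrite ?mem_iota ?typ_k.
  by move: (far _ near_k); rewrite Eq eqxx.
Qed.

Lemma far_potential q (j : config G) : (forall v, v \in near t -> q != g + cell v) ->
  edge_potential (cadd j (alpha_p q)) = edge_potential j.
Proof.
move=> far; have /andP[/andP[/allP star_closed _] _] := edge_type_ok t.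
congr (potential _ _ _ _); apply/eq_in_map => c c_star.
have /andP[c3 /allP bnd_closed] := star_closed _ c_star.
rewrite /cadd /alpha_p; case: (boolP (_ \in _)) => [|_]; last by rewrite addbF.
case/mapP => L _ Ec; have [k k6 [typ_k Eq]] := bnd_eq_place s d c3 (esym Ec).
have near_k : vsub c.1 (bnd_off k) \in near t.
  by apply: (implyP (bnd_closed k _)); rewrite ?mem_iota ?typ_k.
by move: (far _ near_k); rewrite Eq eqxx.
Qed.

Lemma edge_coboundary q (j : config G) :
  bphase q (cadd j (alpha_path [:: e])) * 'i ^ edge_potential j
  = bphase q j * 'i ^ edge_potential (cadd j (alpha_p q)).
Proof.
have [/hasP[v near_v /eqP ->]|not_near] := boolP (has (fun v => q == g + cell v) (near t)).
  exact: near_flip.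
have far v : v \in near t -> q != g + cell v.
  by move=> near_v; apply: contra not_near => /eqP E; apply/hasP; exists v; rewrite ?E.
by rewrite far_flip // far_potential.
Qed.

Lemma thetaP_edge (j : config G) S :
  thetaP a1 a2 s d [:: e] j S
  = 'i ^ edge_potential (cadd j (plaqsum a1 a2 s d S)) / 'i ^ edge_potential j.
Proof.
apply: (@thetaP_coboundary _ a1 a2 s d _ (fun j => 'i ^ edge_potential j)) => [j'|q j'].
  by rewrite expfz_neq0 ?neq0Ci.
exact: edge_coboundary.
Qed.

Lemma star_in_conn c : c \in star t -> inConn a1 a2 [:: e] (place c).
Proof.
move=> c_star; have /andP[/andP[/allP star_closed _] /allP adjacent] := edge_type_ok t.
have /andP[c3 _] := star_closed _ c_star.
rewrite /inConn /= orbF -place_redge0.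
case/orP: (adjacent _ c_star) => [/eqP ->|share]; first by rewrite eqxx.
by rewrite share_vertex_place ?orbT // ltn_ord.
Qed.

Lemma thetaP_edge_local (j j' : config G) S T :
  (forall x, inConn a1 a2 [:: e] x -> j x = j' x) ->
  (forall x, inConn a1 a2 [:: e] x -> plaqsum a1 a2 s d S x = plaqsum a1 a2 s d T x) ->
  thetaP a1 a2 s d [:: e] j S = thetaP a1 a2 s d [:: e] j' T.
Proof.
move=> agree_j agree_S; rewrite !thetaP_edge /edge_potential.
have star_eq (j1 j2 : config G) : {in star t, forall c, j1 (place c) = j2 (place c)} ->
  [seq j1 (place c) | c <- star t] = [seq j2 (place c) | c <- star t].
  by move=> agree; apply/eq_in_map.
rewrite (star_eq j j') => [|c /star_in_conn]; last exact: agree_j.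
rewrite (star_eq _ (cadd j' (plaqsum a1 a2 s d T))) // => c /star_in_conn c_conn.
by rewrite /cadd agree_j // agree_S.
Qed.

End SingleEdge.

Lemma inConn_cons (G : finZmodType) (a1 a2 : G) e P x :
  inConn a1 a2 (e :: P) x = inConn a1 a2 [:: e] x || inConn a1 a2 P x.
Proof. by rewrite /inConn /= orbF. Qed.

Theorem lemma3 (G : finZmodType) (a1 a2 : G)
  (Hgen : forall g : G, exists m n : nat, g = a1 *+ m + a2 *+ n)
  (Hnd : honeycomb_nondeg a1 a2)
  (s : 'I_6) (d : bool)
  (P : seq (edge G)) (HP : is_path a1 a2 P)
  (i i' : config G) (Hii' : forall e, inConn a1 a2 P e -> i e = i' e)
  (S T : seq G) (HS : uniq S) (HT : uniq T)
  (HSB : all (inBP a1 a2 s d P) S) (HTB : all (inBP a1 a2 s d P) T)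
  (HST : forall e, inConn a1 a2 P e -> plaqsum a1 a2 s d S e = plaqsum a1 a2 s d T e) :
  thetaP a1 a2 s d P i S = thetaP a1 a2 s d P i' T.
Proof.
elim: P {HP HSB HTB} Hii' HST => [|[g t] P IH] Hii' HST; first by rewrite !thetaP_nil_path.
rewrite [LHS]thetaP_cons_path [RHS]thetaP_cons_path; congr (_ * _).
  apply: (thetaP_edge_local _ _ _ _ _ Hnd) => x x_conn.
    by rewrite /cadd Hii' // inConn_cons x_conn.
  by apply: HST; rewrite inConn_cons x_conn.
by apply: IH => x x_conn; [apply: Hii' | apply: HST]; rewrite inConn_cons x_conn orbT.
Qed.
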